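(* Let $P$ and $Q$ be irreducible transition matrices on the finite set $S$, both reversible with respect to $\pi$. Then $P$ efficiency-dominates $Q$ if and only if the matrix $Q-P$ has all eigenvalues non-negative, which holds if and only if the matrix $D(Q-P)$ has all eigenvalues non-negative, where $D=\mathrm{diag}(\pi)$.
   Context: $S$ is a finite set with $|S|=n$, identified with $\{1,\dots,n\}$, and $\pi$ is a probability distribution on $S$ with $\pi(x)>0$ for all $x$; $D=\mathrm{diag}(\pi(1),\dots,\pi(n))$. A transition matrix $P$ (nonnegative entries, rows summing to 1) acts on functions by $(Pf)(x)=\sum_y P(x,y)f(y)$. $P$ is reversible with respect to $\pi$ if $\pi(x)P(x,y)=\pi(y)P(y,x)$ for all $x,y$; irreducible if every state can be reached from every other with positive probability in some number of steps. For a Markov chain $X_1,X_2,\dots$ with transition matrix $P$ and $X_1\sim\pi$, $v(f,P)=\lim_{N\to\infty}\frac1N\mathrm{Var}\big(\sum_{i=1}^N f(X_i)\big)$. $P$ efficiency-dominates $Q$ if $v(f,P)\le v(f,Q)$ for all $f:S\to\mathbb R$. *)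

From HB Require Import structures.
From mathcomp Require Import all_boot all_order all_algebra.
From mathcomp Require Import all_classical all_reals.
From mathcomp Require Import topology normedtype sequences.
From mathcomp.real_closed Require Import complex.

Set Implicit Arguments.
Unset Strict Implicit.
Unset Printing Implicit Defensive.

Import Order.TTheory GRing.Theory Num.Theory.
Import numFieldNormedType.Exports.
Local Open Scope ring_scope.

Section MarkovDefs.
Variables (R : realType) (n : nat).

Definition positive_distribution (pi : 'I_n -> R) : Prop :=
  (forall x, 0 < pi x) /\ \sum_(x < n) pi x = 1.

Definition transition_matrix (P : 'M[R]_n) : Prop :=
  (forall x y, 0 <= P x y) /\ (forall x, \sum_(y < n) P x y = 1).

Definition reversible (pi : 'I_n -> R) (P : 'M[R]_n) : Prop :=
  forall x y, pi x * P x y = pi y * P y x.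

Definition irreducible (P : 'M[R]_n) : Prop :=
  forall x y, exists k : nat, 0 < (P ^+ k) x y.

(* Law of (X_1,...,X_N) for the chain started at pi:
   Pr(X_1 = w_0, ..., X_N = w_{N-1}) = pi(w_0) prod_k P(w_k, w_{k+1}). *)
Definition path_prob (pi : 'I_n -> R) (P : 'M[R]_n) (N : nat)
    (w : N.-tuple 'I_n) : R :=
  if tval w is x :: _ then
    pi x * \prod_(k < N.-1) P (nth x w k) (nth x w k.+1)
  else 1.

Definition path_expect (pi : 'I_n -> R) (P : 'M[R]_n) (N : nat)
    (g : N.-tuple 'I_n -> R) : R :=
  \sum_(w : N.-tuple 'I_n) path_prob pi P w * g w.

Definition var_partial_sum (pi : 'I_n -> R) (P : 'M[R]_n) (f : 'I_n -> R)
    (N : nat) : R :=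
  let S := fun w : N.-tuple 'I_n => \sum_(x <- w) f x in
  path_expect pi P (fun w => S w ^+ 2) - (path_expect pi P S) ^+ 2.

Definition asymp_var (pi : 'I_n -> R) (P : 'M[R]_n) (f : 'I_n -> R) : R :=
  limn (fun N : nat => var_partial_sum pi P f N / N%:R).

Definition efficiency_dominates (pi : 'I_n -> R) (P Q : 'M[R]_n) : Prop :=
  forall f : 'I_n -> R, asymp_var pi P f <= asymp_var pi Q f.

(* all (complex) eigenvalues of the real matrix A are real and non-negative *)
Definition eigenvalues_nonneg (A : 'M[R]_n) : Prop :=
  forall a : R[i], eigenvalue (map_mx (fun x : R => (x%:C)%C) A) a -> 0 <= a.

Definition diag_of (pi : 'I_n -> R) : 'M[R]_n := diag_mx (\row_i pi i).

End MarkovDefs.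

From HB Require Import structures.
From mathcomp Require Import all_boot all_order all_algebra.
From mathcomp Require Import all_classical all_reals.
From mathcomp Require Import topology normedtype sequences.
From mathcomp.real_closed Require Import complex.
From mathcomp Require Import spectral sesquilinear.
From mathcomp Require Import ring lra zify.

Set Implicit Arguments.
Unset Strict Implicit.
Unset Printing Implicit Defensive.

Import Order.TTheory GRing.Theory Num.Theory.
Import numFieldNormedType.Exports.
Local Open Scope ring_scope.

(* For a centred f and a solution g of the Poisson equation (I - P) g = f,
   conditioning on the first step gives
   Var(f(X_1) + ... + f(X_N)) = N (2 <f,g> - <f,f>) + O(1), where <.,.> is the
   inner product of L^2(pi); hence v(f,P) = 2 <f,g> - <f,f>.  Irreducibility
   makes the harmonic functions constant, so the Poisson equation is solvable
   for every centred f.  As P is self-adjoint with Dirichlet form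
   E_P(u) = <(I - P) u, u> >= 0, <f,g> is the maximum of 2 <f,a> - E_P(a) over
   all a, attained at a = g; comparing these maxima for P and Q shows that P
   dominates Q iff E_Q <= E_P, i.e. iff the symmetric matrix D (Q - P) is
   positive semidefinite.  Finally Q - P is similar to the symmetric matrix
   D^{1/2} (Q - P) D^{-1/2}, which is congruent to D (Q - P), and a real
   symmetric matrix has nonnegative spectrum iff it is positive semidefinite. *)

Section Operators.
Variables (R : realType) (n : nat).
Implicit Types (M : 'M[R]_n) (mu u v : 'I_n -> R).

Definition mxapp M u : 'I_n -> R := fun x => \sum_y M x y * u y.
Definition lap M u : 'I_n -> R := u - mxapp M u.
Definition wdot mu u v := \sum_x mu x * u x * v x.
Definition qf M u := \sum_x \sum_y u x * M x y * u y.

Lemma mxappB M u v : mxapp M (u - v) = mxapp M u - mxapp M v.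
Proof. by apply/funext => x; rewrite /mxapp !fctE -sumrB; apply: eq_bigr => y _; ring. Qed.

Lemma mxapp1 u : mxapp 1%:M u = u.
Proof.
apply/funext => x; rewrite /mxapp (bigD1 x) //= mxE eqxx mul1r big1 ?addr0 //.
by move=> y /negbTE yx; rewrite mxE eq_sym yx mul0r.
Qed.

Lemma mxappM M1 M2 u : mxapp (M1 *m M2) u = mxapp M1 (mxapp M2 u).
Proof.
apply/funext => x; rewrite /mxapp.
under eq_bigr do rewrite mxE mulr_suml.
rewrite exchange_big; apply: eq_bigr => z _ /=; rewrite mulr_sumr.
by apply: eq_bigr => y _; rewrite mulrA.
Qed.

Lemma lapB M u v : lap M (u - v) = lap M u - lap M v.
Proof. by rewrite /lap mxappB; apply/funext => x; rewrite !fctE; ring. Qed.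

Lemma row_mul_lap M (u : 'rV[R]_n) :
  u *m (1%:M - M^T) = \row_x lap M (fun j => u 0 j) x.
Proof.
apply/rowP => x; rewrite mulmxBr mulmx1 !mxE /lap /mxapp !fctE.
by congr (_ - _); apply: eq_bigr => j _; rewrite !mxE mulrC.
Qed.

Lemma wdotC mu u v : wdot mu u v = wdot mu v u.
Proof. by apply: eq_bigr => x _; ring. Qed.

Lemma wdotBl mu u1 u2 v : wdot mu (u1 - u2) v = wdot mu u1 v - wdot mu u2 v.
Proof. by rewrite /wdot -sumrB; apply: eq_bigr => x _; rewrite !fctE; ring. Qed.

Lemma wdotBr mu u v1 v2 : wdot mu u (v1 - v2) = wdot mu u v1 - wdot mu u v2.
Proof. by rewrite wdotC wdotBl !(wdotC _ u). Qed.

Lemma wdot_mxapp mu M u v : reversible mu M ->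
  wdot mu (mxapp M u) v = wdot mu u (mxapp M v).
Proof.
move=> M_rev; rewrite /wdot /mxapp.
transitivity (\sum_x \sum_y mu x * M x y * u y * v x).
  by apply: eq_bigr => x _; rewrite mulr_sumr mulr_suml; apply: eq_bigr => y _; ring.
rewrite exchange_big; apply: eq_bigr => y _ /=; rewrite mulr_sumr.
by apply: eq_bigr => x _; rewrite M_rev; ring.
Qed.

Lemma wdot_lap mu M u v : reversible mu M ->
  wdot mu (lap M u) v = wdot mu u (lap M v).
Proof. by move=> M_rev; rewrite wdotBl wdotBr wdot_mxapp. Qed.

End Operators.

Section StochasticPowers.
Variables (R : realType) (n : nat) (P : 'M[R]_n).
Hypothesis P_ge0 : forall x y, 0 <= P x y.
Hypothesis P_row : forall x, \sum_y P x y = 1.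

Lemma mxapp_cst1 : mxapp P (fun=> 1) = fun=> 1.
Proof. by apply/funext => x; rewrite /mxapp; under eq_bigr do rewrite mulr1. Qed.

Lemma mxapp_pow_fixed h k : mxapp P h = h -> mxapp (P ^+ k) h = h.
Proof.
move=> Ph; elim: k => [|k IH]; first by rewrite expr0 mxapp1.
by rewrite exprS -mulmxE mxappM IH.
Qed.

Lemma mxpow_ge0 k x y : 0 <= (P ^+ k) x y.
Proof.
elim: k x y => [|k IH] x y; first by rewrite expr0 mxE ler0n.
by rewrite exprS -mulmxE mxE; apply: sumr_ge0 => z _; apply: mulr_ge0.
Qed.

Lemma mxpow_row_sum k x : \sum_y (P ^+ k) x y = 1.
Proof.
have /(congr1 (fun h => h x)) := mxapp_pow_fixed k mxapp_cst1.
by rewrite /mxapp; under eq_bigr do rewrite mulr1.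
Qed.

Lemma mxapp_pow_bound g k x : `|mxapp (P ^+ k) g x| <= \sum_y `|g y|.
Proof.
apply: (le_trans (ler_norm_sum _ _ _)).
apply: (@le_trans _ _ (\sum_y (P ^+ k) x y * \sum_z `|g z|)).
  apply: ler_sum => y _; rewrite normrM ger0_norm ?mxpow_ge0 //.
  by apply: ler_wpM2l; [apply: mxpow_ge0 | rewrite (bigD1 y) //= lerDl sumr_ge0].
by rewrite -mulr_suml mxpow_row_sum mul1r.
Qed.

End StochasticPowers.

Section PathExpectation.
Variables (R : realType) (n : nat) (P : 'M[R]_n).
Implicit Types (mu : 'I_n -> R).

Lemma big_tuple_cons N (F : N.+1.-tuple 'I_n -> R) :
  \sum_(w : N.+1.-tuple 'I_n) F w = \sum_x \sum_(t : N.-tuple 'I_n) F (cons_tuple x t).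
Proof.
rewrite pair_big /= (reindex (fun p : 'I_n * N.-tuple 'I_n => cons_tuple p.1 p.2)) //=.
exists (fun w : N.+1.-tuple 'I_n => (thead w, [tuple of behead w])).
  by move=> [x t] _; congr (_, _); apply: val_inj.
by move=> w _; rewrite [RHS]tuple_eta.
Qed.

Lemma path_prob_cons mu N x (t : N.-tuple 'I_n) :
  path_prob mu P (cons_tuple x t) = mu x * path_prob (P x) P t.
Proof.
rewrite /path_prob /=; case: t => [[|y s] /= /eqP sizeE].
  by rewrite -sizeE big_ord0.
rewrite -sizeE big_ord_recl /=; congr (_ * (_ * _)).
apply: eq_bigr => k _; rewrite add0n.
rewrite (@set_nth_default _ (y :: s) y x); last by rewrite /= ltnS ltnW.
by rewrite (@set_nth_default _ s y x).
Qed.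

Lemma path_expect_nil mu (G : 0.-tuple 'I_n -> R) : path_expect mu P G = G [tuple].
Proof.
rewrite /path_expect (eq_bigr (fun _ => G [tuple])); last first.
  by move=> w _; rewrite (tuple0 w) /= mul1r.
by rewrite sumr_const card_tuple expn0.
Qed.

Lemma path_expect_cons mu N (G : N.+1.-tuple 'I_n -> R) :
  path_expect mu P G =
  \sum_x mu x * path_expect (P x) P (fun t => G (cons_tuple x t)).
Proof.
rewrite /path_expect big_tuple_cons; apply: eq_bigr => x _.
by rewrite mulr_sumr; apply: eq_bigr => t _; rewrite path_prob_cons mulrA.
Qed.

Lemma eq_path_expect mu N (G H : N.-tuple 'I_n -> R) : G =1 H ->
  path_expect mu P G = path_expect mu P H.
Proof. by move=> GH; apply: eq_bigr => w _; rewrite GH. Qed.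

Lemma path_expectD mu N (G H : N.-tuple 'I_n -> R) :
  path_expect mu P (fun t => G t + H t) = path_expect mu P G + path_expect mu P H.
Proof. by rewrite /path_expect -big_split; apply: eq_bigr => w _; rewrite mulrDr. Qed.

Lemma path_expectZ mu N c (G : N.-tuple 'I_n -> R) :
  path_expect mu P (fun t => c * G t) = c * path_expect mu P G.
Proof. by rewrite /path_expect mulr_sumr; apply: eq_bigr => w _; rewrite mulrCA. Qed.

Hypothesis P_row : forall x, \sum_y P x y = 1.

Lemma path_expect_cst mu N c : \sum_x mu x = 1 ->
  path_expect mu P (fun _ : N.-tuple 'I_n => c) = c.
Proof.
elim: N mu => [|N IH] mu mu1; first by rewrite path_expect_nil.
rewrite path_expect_cons (eq_bigr (fun x => mu x * c)) => [|x _]; last by rewrite IH.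
by rewrite -mulr_suml mu1 mul1r.
Qed.

Lemma path_expectDc mu N c (G : N.-tuple 'I_n -> R) : \sum_x mu x = 1 ->
  path_expect mu P (fun t => c + G t) = c + path_expect mu P G.
Proof. by move=> mu1; rewrite path_expectD path_expect_cst. Qed.

End PathExpectation.

Lemma limn_div_nat (R : realType) (u : nat -> R) (C K : R) :
  (forall N, `|u N - N%:R * C| <= K) -> limn (fun N => u N / N%:R) = C.
Proof.
move=> uK; apply: (cvg_lim (@Rhausdorff R)); apply/cvgrPdist_le => e e_gt0.
near=> N.
have N_gt0 : (0 : R) < N%:R by rewrite ltr0n; near: N; exact: nbhs_infty_gt.
have NK : K / e <= N%:R by near: N; exact: nbhs_infty_ger.
rewrite -(mulfK (lt0r_neq0 N_gt0) C) -mulrBl normrM normfV (gtr0_norm N_gt0).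
rewrite ler_pdivrMr // distrC mulrC (le_trans (uK N)) //.
by rewrite -ler_pdivrMl // mulrC.
Unshelve. all: by end_near.
Qed.

Section PartialSums.
Variables (R : realType) (n : nat) (P : 'M[R]_n) (f : 'I_n -> R).
Hypothesis P_ge0 : forall x y, 0 <= P x y.
Hypothesis P_row : forall x, \sum_y P x y = 1.

Definition psum N (t : N.-tuple 'I_n) := \sum_(x <- t) f x.

Lemma psum_cons N x (t : N.-tuple 'I_n) : psum (cons_tuple x t) = f x + psum t.
Proof. by rewrite /psum /= big_cons. Qed.

(* [cond_mean N x] is E[f(X_2) + ... + f(X_(N+1)) | X_1 = x]. *)
Definition cond_mean N x := path_expect (P x) P (@psum N).

Lemma cond_mean0 x : cond_mean 0 x = 0.
Proof. by rewrite /cond_mean path_expect_nil /psum big_nil. Qed.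

Lemma cond_meanS N x : cond_mean N.+1 x = mxapp P (f + cond_mean N) x.
Proof.
rewrite /cond_mean path_expect_cons /mxapp; apply: eq_bigr => y _; congr (_ * _).
by rewrite fctE -path_expectDc //; apply: eq_path_expect => t; rewrite psum_cons.
Qed.

Lemma path_expect_psum_cons mu N : path_expect mu P (@psum N.+1) =
  \sum_x mu x * (f x + cond_mean N x).
Proof.
rewrite path_expect_cons; apply: eq_bigr => x _; congr (_ * _).
by rewrite -path_expectDc //; apply: eq_path_expect => t; rewrite psum_cons.
Qed.

Lemma path_expect_psum_sq_cons mu N :
  path_expect mu P (fun t : N.+1.-tuple 'I_n => psum t ^+ 2) =
  \sum_x mu x * (f x ^+ 2 + 2 * f x * cond_mean N x +
                 path_expect (P x) P (fun t : N.-tuple 'I_n => psum t ^+ 2)).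
Proof.
rewrite path_expect_cons; apply: eq_bigr => x _; congr (_ * _).
rewrite /cond_mean -path_expectZ -addrA -path_expectD -path_expectDc //.
by apply: eq_path_expect => t; rewrite psum_cons; ring.
Qed.

Variable pi : 'I_n -> R.
Hypothesis pi1 : \sum_x pi x = 1.
Hypothesis pi_stat : forall y, \sum_x pi x * P x y = pi y.

Lemma stationary_mxapp g : \sum_x pi x * mxapp P g x = \sum_x pi x * g x.
Proof.
rewrite /mxapp (eq_bigr (fun x => \sum_y pi x * P x y * g y)); last first.
  by move=> x _; rewrite mulr_sumr; apply: eq_bigr => y _; rewrite mulrA.
by rewrite exchange_big; apply: eq_bigr => y _; rewrite -mulr_suml pi_stat.
Qed.

Lemma path_expect_stationary N (G : N.-tuple 'I_n -> R) :
  \sum_x pi x * path_expect (P x) P G = path_expect pi P G.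
Proof.
case: N G => [|N] G.
  under eq_bigr do rewrite path_expect_nil.
  by rewrite path_expect_nil -mulr_suml pi1 mul1r.
under eq_bigr do rewrite path_expect_cons -/(mxapp P _ _).
by rewrite stationary_mxapp path_expect_cons.
Qed.

Hypothesis pi_ge0 : forall x, 0 <= pi x.
Hypothesis f_centred : \sum_x pi x * f x = 0.

Lemma cond_mean_centred N : \sum_x pi x * cond_mean N x = 0.
Proof.
elim: N => [|N IH]; first by rewrite big1 // => x _; rewrite cond_mean0 mulr0.
under eq_bigr do rewrite cond_meanS.
rewrite stationary_mxapp; under eq_bigr do rewrite !fctE mulrDr.
by rewrite big_split /= f_centred IH addr0.
Qed.

Lemma path_expect_psum_eq0 N : path_expect pi P (@psum N) = 0.
Proof.
case: N => [|N]; first by rewrite path_expect_nil /psum big_nil.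
rewrite path_expect_psum_cons; under eq_bigr do rewrite mulrDr.
by rewrite big_split /= f_centred cond_mean_centred addr0.
Qed.

Hypothesis P_rev : reversible pi P.
Variable g : 'I_n -> R.
Hypothesis g_poisson : lap P g = f.

Lemma cond_mean_poisson N : cond_mean N = mxapp P g - mxapp (P ^+ N.+1) g.
Proof.
elim: N => [|N IH]; apply/funext => x.
  by rewrite cond_mean0 !fctE [P ^+ 1]expr1 subrr.
rewrite cond_meanS (_ : f + cond_mean N = g - mxapp (P ^+ N.+1) g).
  by rewrite mxappB [P ^+ N.+2]exprS -mulmxE mxappM.
by rewrite -g_poisson IH /lap addrA subrK.
Qed.

Lemma wdot_poisson_pow k :
  wdot pi f (mxapp (P ^+ k.+1) g) =
  wdot pi g (mxapp (P ^+ k.+1) g) - wdot pi g (mxapp (P ^+ k.+2) g).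
Proof.
by rewrite -g_poisson wdotBl wdot_mxapp // -mxappM mulmxE -exprS.
Qed.

Lemma path_expect_psum_sq N :
  path_expect pi P (fun t : N.-tuple 'I_n => psum t ^+ 2) =
  N%:R * (2 * wdot pi f g - wdot pi f f) -
  2 * (wdot pi g (mxapp P g) - wdot pi g (mxapp (P ^+ N.+1) g)).
Proof.
elim: N => [|N IH].
  by rewrite path_expect_nil /psum big_nil expr0n /= mul0r expr1 subrr mulr0 subrr.
rewrite path_expect_psum_sq_cons.
under eq_bigr do rewrite !mulrDr.
rewrite !big_split /= path_expect_stationary IH.
have -> : \sum_x pi x * (2 * f x * cond_mean N x) = 2 * wdot pi f (cond_mean N).
  by rewrite /wdot mulr_sumr; apply: eq_bigr => x _; ring.
have -> : \sum_x pi x * f x ^+ 2 = wdot pi f f.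
  by apply: eq_bigr => x _; ring.
have fPg : wdot pi f (mxapp P g) = wdot pi f g - wdot pi f f.
  by rewrite -wdotBr -{3}g_poisson /lap subKr.
rewrite cond_mean_poisson wdotBr fPg wdot_poisson_pow -natr1.
ring.
Qed.

Lemma wdot_pow_bound k :
  `|wdot pi g (mxapp (P ^+ k) g)| <= \sum_x pi x * `|g x| * \sum_y `|g y|.
Proof.
apply: (le_trans (ler_norm_sum _ _ _)); apply: ler_sum => x _.
rewrite !normrM ger0_norm // ler_wpM2l ?mulr_ge0 //.
exact: mxapp_pow_bound.
Qed.

Lemma asymp_var_poisson : asymp_var pi P f = 2 * wdot pi f g - wdot pi f f.
Proof.
apply: (@limn_div_nat _ _ _
  (2 * (`|wdot pi g (mxapp P g)| + \sum_x pi x * `|g x| * \sum_y `|g y|))) => N.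
have -> : var_partial_sum pi P f N =
    path_expect pi P (fun t : N.-tuple 'I_n => psum t ^+ 2) -
    path_expect pi P (@psum N) ^+ 2 by [].
rewrite path_expect_psum_eq0 expr0n subr0 path_expect_psum_sq addrAC subrr add0r.
rewrite normrN normrM ger0_norm // ler_wpM2l // (le_trans (ler_normB _ _)) //.
by rewrite lerD2l wdot_pow_bound.
Qed.

End PartialSums.

Definition dirichlet (R : realType) n (pi : 'I_n -> R) (P : 'M[R]_n) u :=
  wdot pi (lap P u) u.

Section ReversibleChain.
Variables (R : realType) (n : nat) (pi : 'I_n -> R) (P : 'M[R]_n).
Hypothesis pi_ge0 : forall x, 0 <= pi x.
Hypothesis pi1 : \sum_x pi x = 1.
Hypothesis P_ge0 : forall x y, 0 <= P x y.
Hypothesis P_row : forall x, \sum_y P x y = 1.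
Hypothesis P_irr : irreducible P.
Hypothesis P_rev : reversible pi P.

Lemma reversible_stationary y : \sum_x pi x * P x y = pi y.
Proof.
under eq_bigr do rewrite P_rev.
by rewrite -mulr_sumr P_row mulr1.
Qed.

Lemma harmonic_const h : mxapp P h = h -> forall x y, h x = h y.
Proof.
move=> Ph x y.
have [m _ h_max] := @arg_maxP _ _ _ x predT h isT.
suff hm z : h z = h m by rewrite !hm.
have [k Pk_gt0] := P_irr m z.
have sum0 : \sum_w (P ^+ k) m w * (h m - h w) = 0.
  under eq_bigr do rewrite mulrBr.
  rewrite sumrB -mulr_suml mxpow_row_sum // mul1r.
  have /(congr1 (fun u => u m)) := mxapp_pow_fixed k Ph.
  by rewrite /mxapp => ->; rewrite subrr.
have term_ge0 w : 0 <= (P ^+ k) m w * (h m - h w).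
  by rewrite mulr_ge0 ?mxpow_ge0 // subr_ge0; apply: h_max.
have /eqP := psumr_eq0P (fun w _ => term_ge0 w) sum0 (i := z) isT.
by rewrite mulf_eq0 (gt_eqF Pk_gt0) subr_eq0 => /eqP.
Qed.

Lemma lap_row_const (u : 'rV[R]_n) x0 : u *m (1%:M - P^T) = 0 -> u = u 0 x0 *: const_mx 1.
Proof.
move=> uL0; have Pu : mxapp P (fun j => u 0 j) = (fun j => u 0 j).
  apply/funext => j; apply/esym/subr0_eq.
  by have /rowP/(_ j) := uL0; rewrite row_mul_lap !mxE.
by apply/rowP => j; rewrite !mxE mulr1 (harmonic_const Pu j x0).
Qed.

Lemma poisson_solvable phi : \sum_x pi x * phi x = 0 -> exists g, lap P g = phi.
Proof.
move=> phi_centred.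
have [x0 pi_x0] : exists x, pi x != 0.
  apply/existsP; apply: contraPT pi1 => /existsPn pi0.
  rewrite big1 => [/eqP|x _]; [by rewrite eq_sym oner_eq0 | exact/eqP/negPn/pi0].
pose L : 'M[R]_n := 1%:M - P^T.
pose H := kermx (\col_i pi i).
(* The rows orthogonal to pi form the hyperplane H; the row space of L lies in
   H and has codimension at most 1, as the kernel of L consists of constant rows. *)
have LH : (L <= H)%MS.
  rewrite sub_kermx mulmxBl mul1mx subr_eq0; apply/eqP/colP => i; rewrite !mxE.
  by under eq_bigr do rewrite !mxE mulrC; rewrite reversible_stationary.
have rank_kerL : (\rank (kermx L) <= 1)%N.
  apply: leq_trans (rank_leq_row (const_mx 1 : 'rV[R]_n)); apply: mxrankS.
  apply/row_subP => i.
  have uL0 : row i (kermx L) *m L = 0 by rewrite -row_mul mulmx_ker row0.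
  by rewrite (lap_row_const x0 uL0) scalemx_sub.
have rankH : (\rank H <= n - 1)%N.
  rewrite mxrank_ker leq_sub2l // lt0n mxrank_eq0.
  by apply: contra pi_x0 => /eqP/colP/(_ x0); rewrite !mxE => ->.
have HL : (H <= L)%MS.
  suff /andP[] : (L == H)%MS by [].
  rewrite -(mxrank_leqif_eq LH) eqn_leq mxrankS //=.
  by move: rank_kerL rankH (rank_leq_row L); rewrite mxrank_ker; lia.
have /submxP [g gL] : (\row_x phi x <= L)%MS.
  apply: submx_trans HL; rewrite sub_kermx; apply/eqP/rowP => j.
  rewrite !mxE -[RHS]phi_centred.
  by apply: eq_bigr => x _; rewrite !mxE mulrC.
exists (fun j => g 0 j); apply/funext => x.
by have /rowP/(_ x) := gL; rewrite row_mul_lap !mxE.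
Qed.

Lemma lap_centred u : \sum_x pi x * lap P u x = 0.
Proof.
under eq_bigr do rewrite /lap !fctE mulrBr.
by rewrite sumrB stationary_mxapp ?subrr //; apply: reversible_stationary.
Qed.

Lemma asymp_var_lap g phi : lap P g = phi ->
  asymp_var pi P phi = 2 * wdot pi phi g - wdot pi phi phi.
Proof.
move=> g_poisson; apply: asymp_var_poisson => //; first exact: reversible_stationary.
by rewrite -g_poisson lap_centred.
Qed.

Lemma var_partial_sum_shift f c N :
  var_partial_sum pi P (fun x => f x - c) N = var_partial_sum pi P f N.
Proof.
have shift (w : N.-tuple 'I_n) :
    \sum_(x <- w) (f x - c) = - (c *+ N) + \sum_(x <- w) f x.
  by rewrite sumrB big_const_seq count_predT size_tuple iter_addr_0 addrC.
rewrite /var_partial_sum /= (eq_path_expect _ _ shift) path_expectDc //.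
rewrite (eq_path_expect _ _ (H := fun w => (c *+ N) ^+ 2 +
    (- (2 * c *+ N) * \sum_(x <- w) f x + (\sum_(x <- w) f x) ^+ 2))); last first.
  by move=> w; rewrite shift; ring.
rewrite !path_expectDc // path_expectD path_expectZ.
ring.
Qed.

Lemma asymp_var_shift f c : asymp_var pi P (fun x => f x - c) = asymp_var pi P f.
Proof.
by rewrite /asymp_var; congr (limn _); apply/funext => N; rewrite var_partial_sum_shift.
Qed.

Lemma dirichlet_sum_sq u :
  2 * dirichlet pi P u = \sum_x \sum_y pi x * P x y * (u x - u y) ^+ 2.
Proof.
have row_sum : \sum_x \sum_y pi x * P x y * u x ^+ 2 = \sum_x pi x * u x ^+ 2.
  by apply: eq_bigr => x _; rewrite -mulr_suml -mulr_sumr P_row mulr1.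
have col_sum : \sum_x \sum_y pi x * P x y * u y ^+ 2 = \sum_x pi x * u x ^+ 2.
  rewrite exchange_big; apply: eq_bigr => y _.
  by rewrite -mulr_suml reversible_stationary.
have cross : \sum_x \sum_y pi x * P x y * (u x * u y) = wdot pi (mxapp P u) u.
  apply: eq_bigr => x _; rewrite /mxapp mulr_sumr mulr_suml.
  by apply: eq_bigr => y _; ring.
have -> : \sum_x \sum_y pi x * P x y * (u x - u y) ^+ 2 =
    \sum_x \sum_y pi x * P x y * u x ^+ 2 + \sum_x \sum_y pi x * P x y * u y ^+ 2
    - 2 * \sum_x \sum_y pi x * P x y * (u x * u y).
  rewrite mulr_sumr -!big_split -sumrB; apply: eq_bigr => x _ /=.
  by rewrite mulr_sumr -!big_split -sumrB; apply: eq_bigr => y _ /=; ring.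
rewrite row_sum col_sum cross /dirichlet /lap wdotBl.
have -> : wdot pi u u = \sum_x pi x * u x ^+ 2 by apply: eq_bigr => x _; ring.
ring.
Qed.

Lemma dirichlet_ge0 u : 0 <= dirichlet pi P u.
Proof.
rewrite -(@pmulr_rge0 _ 2) // dirichlet_sum_sq.
apply: sumr_ge0 => x _; apply: sumr_ge0 => y _.
by rewrite mulr_ge0 ?sqr_ge0 ?mulr_ge0.
Qed.

Lemma dirichlet_variational phi a b : lap P b = phi ->
  2 * wdot pi phi a - dirichlet pi P a <= wdot pi phi b.
Proof.
move=> b_poisson; have := dirichlet_ge0 (a - b).
rewrite /dirichlet lapB b_poisson wdotBl !wdotBr (wdot_lap a b P_rev).
rewrite b_poisson (wdotC _ a).
lra.
Qed.

End ReversibleChain.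

Lemma dirichletB (R : realType) n (pi : 'I_n -> R) (P Q : 'M[R]_n) u :
  dirichlet pi P u - dirichlet pi Q u = qf (diag_of pi *m (Q - P)) u.
Proof.
rewrite /dirichlet -wdotBl /lap /wdot /qf; apply: eq_bigr => x _.
rewrite !fctE /mxapp (_ : _ - _ - _ = \sum_y (Q x y - P x y) * u y); last first.
  by under [RHS]eq_bigr do rewrite mulrBl; rewrite sumrB; ring.
rewrite mulr_sumr mulr_suml; apply: eq_bigr => y _; rewrite mul_diag_mx !mxE; ring.
Qed.

Section Domination.
Variables (R : realType) (n : nat) (pi : 'I_n -> R) (P Q : 'M[R]_n).
Hypothesis pi_ge0 : forall x, 0 <= pi x.
Hypothesis pi1 : \sum_x pi x = 1.
Hypotheses (P_ge0 : forall x y, 0 <= P x y) (Q_ge0 : forall x y, 0 <= Q x y).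
Hypotheses (P_row : forall x, \sum_y P x y = 1) (Q_row : forall x, \sum_y Q x y = 1).
Hypotheses (P_irr : irreducible P) (Q_irr : irreducible Q).
Hypotheses (P_rev : reversible pi P) (Q_rev : reversible pi Q).

Lemma efficiency_dominates_psd :
  efficiency_dominates pi P Q <-> forall u, 0 <= qf (diag_of pi *m (Q - P)) u.
Proof.
split=> [dom u | psd f]; first rewrite -dirichletB subr_ge0.
  set phi := lap Q u.
  have [a a_poisson] : exists a, lap P a = phi.
    by apply: (poisson_solvable pi1) => //; apply: lap_centred.
  have := dom phi.
  have -> : asymp_var pi P phi = 2 * wdot pi phi a - wdot pi phi phi.
    exact: asymp_var_lap.
  have -> : asymp_var pi Q phi = 2 * wdot pi phi u - wdot pi phi phi.
    exact: asymp_var_lap.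
  have := dirichlet_variational pi_ge0 P_ge0 P_row P_rev u a_poisson.
  rewrite /dirichlet -/phi (wdotC _ phi u).
  lra.
rewrite -(asymp_var_shift pi1 P_row _ (\sum_x pi x * f x)).
rewrite -(asymp_var_shift pi1 Q_row _ (\sum_x pi x * f x)).
set phi := fun x => _.
have phi_centred : \sum_x pi x * phi x = 0.
  by under eq_bigr do rewrite mulrBr; rewrite sumrB -mulr_suml pi1 mul1r subrr.
have [a a_poisson] : exists a, lap P a = phi by exact: (poisson_solvable pi1).
have [b b_poisson] : exists b, lap Q b = phi by exact: (poisson_solvable pi1).
have -> : asymp_var pi P phi = 2 * wdot pi phi a - wdot pi phi phi.
  exact: asymp_var_lap.
have -> : asymp_var pi Q phi = 2 * wdot pi phi b - wdot pi phi phi.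
  exact: asymp_var_lap.
have := dirichlet_variational pi_ge0 Q_ge0 Q_row Q_rev a b_poisson.
have := psd a; rewrite -dirichletB {1}/dirichlet a_poisson (wdotC _ phi a).
lra.
Qed.

End Domination.

Section Spectral.
Local Open Scope sesquilinear_scope.

Lemma spectral_diag_eigenvalue (C : numClosedFieldType) m (A : 'M[C]_m) i :
  A \is normalmx -> eigenvalue A (spectral_diag A 0 i).
Proof.
move=> /orthomx_spectralP; set U := spectralmx A.
have U_unitary : U \is unitarymx := spectral_unitarymx A.
have UU : U *m U^t* = 1%:M by apply/unitarymxP.
rewrite invmx_unitary // => AE; apply/eigenvalueP; exists (row i U).
  rewrite -row_mul {1}AE !mulmxA UU mul1mx mul_diag_mx.
  by apply/rowP => j; rewrite !mxE.
apply/eqP => Ui0; have /rowP/(_ i) := congr1 (row i) UU.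
by rewrite row_mul Ui0 mul0mx !mxE eqxx => /eqP; rewrite eq_sym oner_eq0.
Qed.

End Spectral.

Section RealSymmetric.
Variables (R : realType) (n : nat).
Local Notation "x %:CC" := ((x%:C)%C : R[i]) (at level 2, format "x %:CC").

Lemma real_complex_real (x : R) : x%:CC \is Num.real.
Proof. by rewrite complex_real. Qed.

Lemma conj_real_complex (x : R) : (x%:CC)^* = x%:CC.
Proof. by rewrite conj_Creal // real_complex_real. Qed.

Lemma mul_conj_rect (a b c d : R) :
  (a%:CC + 'i * b%:CC) * (c%:CC + 'i * d%:CC)^* =
  (a * c + b * d)%:CC + 'i * (b * c - a * d)%:CC.
Proof.
rewrite rmorphD rmorphM /= !conj_real_complex conjCi.
transitivity (a%:CC * c%:CC - 'i ^+ 2 * b%:CC * d%:CC +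
              'i * (b%:CC * c%:CC - a%:CC * d%:CC)); first by ring.
by rewrite sqrCi; ring.
Qed.

Lemma qf_complex_rect (N : 'M[R]_n) (r s : 'I_n -> R) : (forall x y, N x y = N y x) ->
  \sum_x \sum_y ((r x)%:CC + 'i * (s x)%:CC) * (N x y)%:CC *
                 ((r y)%:CC + 'i * (s y)%:CC)^* = (qf N r + qf N s)%:CC.
Proof.
move=> Nsym.
have skew : \sum_x \sum_y N x y * (s x * r y - r x * s y) = 0.
  under eq_bigr do under eq_bigr do rewrite mulrBr.
  under eq_bigr do rewrite sumrB.
  apply/eqP; rewrite sumrB subr_eq0 exchange_big /=; apply/eqP.
  by apply: eq_bigr => x _; apply: eq_bigr => y _; rewrite Nsym; ring.
transitivity (\sum_x \sum_y ((N x y * (r x * r y + s x * s y))%:CC +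
                             'i * (N x y * (s x * r y - r x * s y))%:CC)).
  apply: eq_bigr => x _; apply: eq_bigr => y _.
  by rewrite mulrAC mul_conj_rect !rmorphM /=; ring.
under eq_bigr do rewrite big_split /= -rmorph_sum -mulr_sumr -rmorph_sum.
rewrite big_split /= -mulr_sumr -!rmorph_sum /= skew rmorph0 mulr0 addr0 -big_split /=.
by congr (_%:CC); apply: eq_bigr => x _; rewrite -big_split; apply: eq_bigr => y _ /=; ring.
Qed.

Lemma psd_eigenvalues_nonneg (N : 'M[R]_n) : (forall x y, N x y = N y x) ->
  (forall u, 0 <= qf N u) -> eigenvalues_nonneg N.
Proof.
move=> Nsym N_psd a /eigenvalueP [v va v_neq0].
set S := \sum_y v 0 y * (v 0 y)^*.
have S_gt0 : 0 < S.
  have [y vy] : exists y, v 0 y != 0.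
    apply/existsP; apply: contraNT v_neq0 => /existsPn v0.
    by apply/eqP/rowP => y; rewrite mxE; apply/eqP/negPn/v0.
  rewrite /S (bigD1 y) //= ltr_wpDr ?mul_conjC_gt0 //.
  by apply: sumr_ge0 => z _; exact: mul_conjC_ge0.
have aS : \sum_x \sum_y v 0 x * (N x y)%:CC * (v 0 y)^* = a * S.
  rewrite exchange_big /S mulr_sumr; apply: eq_bigr => y _ /=.
  have /rowP/(_ y) := va; rewrite !mxE mulrA => <-; rewrite mulr_suml.
  by apply: eq_bigr => x _; rewrite mxE.
have vE x : v 0 x = (complex.Re (v 0 x))%:CC + 'i * (complex.Im (v 0 x))%:CC.
  by rewrite -complexiE -complexE.
have vN : \sum_x \sum_y v 0 x * (N x y)%:CC * (v 0 y)^* =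
    (qf N (fun x => complex.Re (v 0 x)) + qf N (fun x => complex.Im (v 0 x)))%:CC.
  rewrite -qf_complex_rect //.
  by apply: eq_bigr => x _; apply: eq_bigr => y _; rewrite -!vE.
have -> : a = a * S / S by rewrite mulfK // gt_eqF.
by rewrite -aS vN divr_ge0 ?ler0c ?addr_ge0 // ltW.
Qed.

Lemma eigenvalues_nonneg_psd (N : 'M[R]_n) : (forall x y, N x y = N y x) ->
  eigenvalues_nonneg N -> forall u, 0 <= qf N u.
Proof.
move=> Nsym N_eig u.
set NC := map_mx (fun x : R => x%:CC) N.
have NC_normal : NC \is normalmx.
  apply: symmetric_normalmx; last by apply/mxOverP => i j; rewrite mxE real_complex_real.
  by apply/is_hermitianmxP; rewrite expr0 scale1r; apply/matrixP => i j; rewrite !mxE Nsym.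
have d_ge0 i : 0 <= spectral_diag NC 0 i by apply/N_eig/spectral_diag_eigenvalue.
have /orthomx_spectralP := NC_normal.
set U := spectralmx NC; set d := spectral_diag NC.
rewrite invmx_unitary ?spectral_unitarymx // => NCE.
pose w i := \sum_x (u x)%:CC * (U i x)^*.
have wJ i : (w i)^* = \sum_y U i y * (u y)%:CC.
  rewrite rmorph_sum; apply: eq_bigr => y _ /=.
  by rewrite rmorphM /= conjCK conj_real_complex mulrC.
have entryE x y : (N x y)%:CC = \sum_i (U i x)^* * d 0 i * U i y.
  have -> : (N x y)%:CC = NC x y by rewrite mxE.
  rewrite NCE mxE.
  by apply: eq_bigr => i _; rewrite mul_mx_diag !mxE.
have : (qf N u)%:CC = \sum_i d 0 i * (w i * (w i)^*).
  transitivity (\sum_x \sum_y \sum_i d 0 i * ((u x)%:CC * (U i x)^* * (U i y * (u y)%:CC))).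
    rewrite rmorph_sum; apply: eq_bigr => x _; rewrite rmorph_sum; apply: eq_bigr => y _ /=.
    by rewrite !rmorphM /= entryE mulr_sumr mulr_suml; apply: eq_bigr => i _; ring.
  under eq_bigr do rewrite exchange_big.
  rewrite exchange_big; apply: eq_bigr => i _ /=.
  rewrite wJ mulr_suml mulr_sumr; apply: eq_bigr => x _.
  by rewrite !mulr_sumr; apply: eq_bigr => y _; ring.
by rewrite -ler0c => ->; apply: sumr_ge0 => i _; rewrite mulr_ge0 ?mul_conjC_ge0.
Qed.

Lemma eigenvalues_nonneg_psdE (N : 'M[R]_n) : (forall x y, N x y = N y x) ->
  eigenvalues_nonneg N <-> forall u, 0 <= qf N u.
Proof.
by move=> Nsym; split; [exact: eigenvalues_nonneg_psd | exact: psd_eigenvalues_nonneg].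
Qed.

End RealSymmetric.

Lemma eigenvalue_diag_conj (F : fieldType) m (A B : 'M[F]_m) (t : 'I_m -> F) :
  (forall x, t x != 0) -> (forall x y, B x y = t x * A x y / t y) ->
  forall a, eigenvalue A a -> eigenvalue B a.
Proof.
move=> t_neq0 BE a /eigenvalueP [v va v_neq0]; apply/eigenvalueP.
exists (\row_x (v 0 x / t x)).
  apply/rowP => y; have /rowP/(_ y) := va; rewrite !mxE => vAy.
  rewrite (eq_bigr (fun x => v 0 x * A x y / t y)) => [|x _]; last first.
    by rewrite !mxE BE; field; rewrite !t_neq0.
  by rewrite -mulr_suml vAy mulrA.
apply: contraNneq v_neq0 => /rowP v0; apply/eqP/rowP => x.
by have /eqP := v0 x; rewrite !mxE mulf_eq0 invr_eq0 (negbTE (t_neq0 x)) orbF => /eqP.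
Qed.

Lemma eigenvalues_nonneg_diag_conj (R : realType) n (A B : 'M[R]_n) (t : 'I_n -> R) :
  (forall x, t x != 0) -> (forall x y, B x y = t x * A x y / t y) ->
  eigenvalues_nonneg B -> eigenvalues_nonneg A.
Proof.
move=> t_neq0 BE B_eig a /(eigenvalue_diag_conj (t := fun x => (t x)%:C%C)) A_eig.
apply/B_eig/A_eig => [x|x y]; first by rewrite fmorph_eq0.
by rewrite !mxE BE !rmorphM fmorphV.
Qed.

Lemma diag_of_mul_sym (R : realType) n (pi : 'I_n -> R) (A : 'M[R]_n) :
  reversible pi A -> forall x y, (diag_of pi *m A) x y = (diag_of pi *m A) y x.
Proof. by move=> A_rev x y; rewrite !mul_diag_mx !mxE A_rev. Qed.

Lemma reversible_eigenvalues_nonneg (R : realType) n (pi : 'I_n -> R) (A : 'M[R]_n) :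
  (forall x, 0 < pi x) -> reversible pi A ->
  eigenvalues_nonneg A <-> eigenvalues_nonneg (diag_of pi *m A).
Proof.
move=> pi_gt0 A_rev.
pose s x := Num.sqrt (pi x).
have s_neq0 x : s x != 0 by rewrite gt_eqF // sqrtr_gt0.
have s2 x : s x ^+ 2 = pi x by rewrite sqr_sqrtr // ltW.
pose N := \matrix_(x, y) (s x * A x y / s y).
have N_sym x y : N x y = N y x.
  rewrite !mxE; apply: (mulIf (mulf_neq0 (s_neq0 x) (s_neq0 y))).
  have -> : s x * A x y / s y * (s x * s y) = pi x * A x y.
    by rewrite -s2; field; rewrite !s_neq0.
  have -> : s y * A y x / s x * (s x * s y) = pi y * A y x.
    by rewrite -s2; field; rewrite !s_neq0.
  exact: A_rev.
have qfN u : qf (diag_of pi *m A) u = qf N (fun x => s x * u x).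
  apply: eq_bigr => x _; apply: eq_bigr => y _.
  by rewrite mul_diag_mx !mxE -s2; field; rewrite !s_neq0.
have A_N : eigenvalues_nonneg A <-> eigenvalues_nonneg N.
  split; [apply: (eigenvalues_nonneg_diag_conj (t := fun x => (s x)^-1)) |
          apply: (eigenvalues_nonneg_diag_conj (t := s))] => // x.
    by rewrite invr_eq0.
  by move=> y; rewrite mxE; field; rewrite !s_neq0.
  by move=> y; rewrite mxE.
rewrite A_N !eigenvalues_nonneg_psdE //; last exact: diag_of_mul_sym.
split=> psd u; first by rewrite qfN.
have := psd (fun x => u x / s x); rewrite qfN.
by congr (0 <= qf N _); apply/funext => x; rewrite mulrC divfK.
Qed.

Theorem theorem2 (R : realType) (n : nat) (pi : 'I_n -> R) (P Q : 'M[R]_n) :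
  positive_distribution pi ->
  transition_matrix P -> transition_matrix Q ->
  irreducible P -> irreducible Q ->
  reversible pi P -> reversible pi Q ->
  (efficiency_dominates pi P Q <-> eigenvalues_nonneg (Q - P)) /\
  (eigenvalues_nonneg (Q - P) <-> eigenvalues_nonneg (diag_of pi *m (Q - P))).
Proof.
move=> [pi_gt0 pi1] [P_ge0 P_row] [Q_ge0 Q_row] P_irr Q_irr P_rev Q_rev.
have pi_ge0 x : 0 <= pi x by exact: ltW.
have QP_rev : reversible pi (Q - P) by move=> x y; rewrite !mxE !mulrBr P_rev Q_rev.
have QP_eig := reversible_eigenvalues_nonneg pi_gt0 QP_rev.
split; last exact: QP_eig.
rewrite QP_eig eigenvalues_nonneg_psdE; last exact: diag_of_mul_sym.
exact: efficiency_dominates_psd.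
Qed.
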